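(* Assume the scores are produced by a symmetric transformation and the intervals $\mathcal{I}_1,\ldots,\mathcal{I}_L$ are fixed (do not depend on the data). Then: (i) (Joint distribution-freeness) Under $H_0$ (i.e. $Z_1,\ldots,Z_n$ i.i.d. with an arbitrary law $P_1$), $(T_{n,1},\ldots,T_{n,L})$ has the same distribution as $\mathbb{G}(\pi)$, where $\pi$ is a uniformly random permutation of $[n]$; in particular its joint distribution does not depend on $P_1$. (ii) (Pivotalness to changes) If every interval $\mathcal{I}_\ell$, $\ell\in[L]$, contains no changepoint, i.e. for each $\ell$ there is $k\in[K^*+1]$ with $\mathcal{I}_\ell\subset(\tau^*_{k-1},\tau^*_k]$, then the joint distribution of $(T_{n,1},\ldots,T_{n,L})$ under the true law $\mathbb{P}^*$ is the same as under $H_0$ (namely the law of $\mathbb{G}(\pi)$).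
   Context: Let $Z_1,\ldots,Z_n$ be independent random elements of a measurable space $\mathcal{Z}$, $\mathcal{D}=(Z_1,\ldots,Z_n)$, with joint law $\mathbb{P}^*$. Changepoint model: there are $K^*\ge0$ and integers $0=\tau^*_0<\tau^*_1<\cdots<\tau^*_{K^*}<\tau^*_{K^*+1}=n$ such that for each $k\in[K^*+1]$ the $Z_i$, $i\in(\tau^*_{k-1},\tau^*_k]$, are identically distributed with law $P^*_k$, and $P^*_{k+1}\ne P^*_k$ for $k\in[K^*]$. The null hypothesis $H_0$ is $K^*=0$. A measurable $\mathbb{S}:\mathcal{Z}\times\mathcal{Z}^n\to\mathbb{R}$ is a symmetric transformation if $\mathbb{S}(z;\mathcal{D})=\mathbb{S}(z;\mathcal{D}_\pi)$ for all $z$ and all permutations $\pi$ of $[n]$, where $\mathcal{D}_\pi=(Z_{\pi(1)},\ldots,Z_{\pi(n)})$. Scores: $S_i=\mathbb{S}(Z_i;\mathcal{D})+\epsilon e_i$ with fixed $\epsilon>0$ and $e_i$ i.i.d. $\mathcal{N}(0,1)$ independent of the data. Let $\mathcal{I}_1,\ldots,\mathcal{I}_L$ be nonempty subsets (intervals) of $\{1,\ldots,n\}$ (possibly overlapping). For $i\in\mathcal{I}_\ell$ the local rank is $R_{i,\ell}=|\{j\in\mathcal{I}_\ell:S_j\le S_i\}|$. An aggregation function $\mathbb{A}$ maps a finite vector of ranks to $\mathbb{R}$; $T_{n,\ell}=\mathbb{A}((R_{i,\ell})_{i\in\mathcal{I}_\ell})$, the ranks listed in increasing order of $i$. For a permutation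 $\pi$ of $[n]$ define $\mathbb{G}(\pi)\in\mathbb{R}^L$ by $\mathbb{G}(\pi)_\ell=\mathbb{A}\big((|\{j\in\mathcal{I}_\ell:\pi(j)\le\pi(i)\}|)_{i\in\mathcal{I}_\ell}\big)$. *)

From HB Require Import structures.
From mathcomp Require Import all_boot all_order all_algebra all_fingroup.
From mathcomp Require Import all_classical all_reals all_analysis.
Set Implicit Arguments. Unset Strict Implicit. Unset Printing Implicit Defensive.
Import Order.TTheory GRing.Theory Num.Theory.
Local Open Scope classical_set_scope.
Local Open Scope ring_scope.

(* Mutual independence of the 2n random elements Z_1..Z_n (values in T) and
   e_1..e_n (values in R): product rule for all measurable rectangles
   (taking some sets to be the whole space gives every subfamily). *)
Definition mutually_independent {R : realType} {dO d : measure_display}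
  {Omega : measurableType dO} {T : measurableType d} (n : nat)
  (P : probability Omega R) (X : 'I_n -> Omega -> T) (Y : 'I_n -> Omega -> R) :=
  forall (A : 'I_n -> set T) (B : 'I_n -> set R),
    (forall i, measurable (A i)) -> (forall i, measurable (B i)) ->
    P (\bigcap_(i in [set: 'I_n]) (X i @^-1` A i) `&`
       \bigcap_(i in [set: 'I_n]) (Y i @^-1` B i)) =
    ((\prod_(i < n) P (X i @^-1` A i)) * (\prod_(i < n) P (Y i @^-1` B i)))%E.

Definition dataset {dO d : measure_display} {Omega : measurableType dO}
  {T : measurableType d} (n : nat) (X : 'I_n -> Omega -> T) (w : Omega)
  : n.-tuple T := [tuple X i w | i < n].

Definition permute_tuple {T : Type} (n : nat) (pi : 'S_n) (D : n.-tuple T)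
  : n.-tuple T := [tuple tnth D (pi i) | i < n].

Definition symmetric_transformation {R : realType} {d : measure_display}
  {T : measurableType d} (n : nat) (S : T -> n.-tuple T -> R) :=
  measurable_fun [set: T * n.-tuple T] (fun p => S p.1 p.2) /\
  forall (z : T) (D : n.-tuple T) (pi : 'S_n), S z D = S z (permute_tuple pi D).

Definition score {R : realType} {dO d : measure_display}
  {Omega : measurableType dO} {T : measurableType d} (n : nat)
  (S : T -> n.-tuple T -> R) (eps : R)
  (X : 'I_n -> Omega -> T) (Y : 'I_n -> Omega -> R) (w : Omega) (i : 'I_n) : R :=
  S (X i w) (dataset X w) + eps * Y i w.

Definition local_rank {R : realType} (n : nat) (I : {set 'I_n})
  (s : 'I_n -> R) (i : 'I_n) : nat :=
  #|[set j in I | s j <= s i]|.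

(* T_{n,l} = A((R_{i,l})_{i in I_l}), ranks listed in increasing order of i
   (enum of a set of ordinals is increasing). *)
Definition stat_vector {R : realType} {dO d : measure_display}
  {Omega : measurableType dO} {T : measurableType d} (n L : nat)
  (S : T -> n.-tuple T -> R) (eps : R)
  (X : 'I_n -> Omega -> T) (Y : 'I_n -> Omega -> R)
  (I : 'I_L -> {set 'I_n}) (Agg : seq nat -> R) (w : Omega) : 'I_L -> R :=
  fun l => Agg [seq local_rank (I l) (score S eps X Y w) i | i <- enum (I l)].

Definition Gperm {R : realType} (n L : nat) (I : 'I_L -> {set 'I_n})
  (Agg : seq nat -> R) (pi : 'S_n) : 'I_L -> R :=
  fun l => Agg [seq #|[set j in I l | (pi j <= pi i)%N]| | i <- enum (I l)].

Definition uniform_perm_law {R : realType} (n L : nat) (I : 'I_L -> {set 'I_n})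
  (Agg : seq nat -> R) (B : set ('I_L -> R)) : \bar R :=
  ((#|[set pi : 'S_n | `[< B (Gperm I Agg pi) >] ]|)%:R / (n`!)%:R)%:E.

(* Write the sample as the tuple of pairs (Z_i, e_i).  Its law is determined by
   its values on rectangles, where independence makes it a product; hence it is
   invariant under the permutations that preserve blocks of identically
   distributed Z_i, and since the transformation is symmetric, permuting the
   tuple permutes the scores.  Ties between scores are null, because given all
   other coordinates a tie pins the continuous noise e_i to a single value.  So
   the comparison pattern of the scores is the order pattern of a random
   permutation whose law is invariant under right multiplication by the block
   group, while the statistics only depend on the relative order inside each
   block.  Every coset of the block group contains the same number of
   permutations with a given within-block pattern, which makes the law of the
   statistics equal to its law under a uniform permutation. *)

From HB Require Import structures.
From mathcomp Require Import all_boot all_order all_algebra all_fingroup.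
From mathcomp Require Import all_classical all_reals all_analysis measurable_realfun.
Set Implicit Arguments. Unset Strict Implicit. Unset Printing Implicit Defensive.
Import Order.TTheory GRing.Theory Num.Theory.
Local Open Scope ring_scope.

Section RankPermutation.
Context {n : nat}.

Lemma card_ord_lt (m : nat) : (m <= n)%N -> #|[set k : 'I_n | (k < m)%N]| = m.
Proof.
move=> mn; rewrite -sum1_card -[RHS]card_ord -sum1_card.
rewrite -(big_ord_narrow (F := fun=> 1%N) mn) /=.
by apply: eq_bigl => k; rewrite inE.
Qed.

Lemma card_perm_lt (s : 'S_n) (m : nat) : (m <= n)%N -> #|[set x | (s x < m)%N]| = m.
Proof.
move=> mn; rewrite -[RHS](card_ord_lt mn) -[RHS](card_preimset _ (@perm_inj _ s)).
by apply: eq_card => x; rewrite !inE.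
Qed.

Definition perm_order (s : 'S_n) : {ffun 'I_n * 'I_n -> bool} :=
  [ffun p => (s p.1 < s p.2)%N].

Lemma perm_order_inj : injective perm_order.
Proof.
move=> s s' ss'; apply/permP => a; apply: ord_inj.
rewrite -(card_perm_lt s (ltnW (ltn_ord (s a)))) -[RHS](card_perm_lt s' (ltnW (ltn_ord (s' a)))).
apply: eq_card => x; rewrite !inE.
by have := congr1 (fun M : {ffun _ -> bool} => M (x, a)) ss'; rewrite !ffunE.
Qed.

Context {disp : Order.disp_t} {T : orderType disp}.

Lemma rank_perm_exists {f : 'I_n -> T} :
  injective f -> exists s : 'S_n, forall a b, (s a < s b)%N = (f a < f b)%O.
Proof.
move=> finj.
have rank_lt a : (#|[set x | (f x < f a)%O]| < n)%N.
  rewrite -[X in (_ < X)%N]card_ord -cardsT; apply: proper_card; apply/properP.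
  by split; [exact: finset.subsetT | exists a; rewrite ?inE ?ltxx].
pose rank a := Ordinal (rank_lt a).
have rank_mono a b : (f a < f b)%O -> (rank a < rank b)%N.
  move=> ab; apply: proper_card; apply/properP; split.
    by apply/fintype.subsetP => x; rewrite !inE => /lt_trans; apply.
  by exists a; rewrite !inE ?ltxx.
have rank_inj : injective rank.
  move=> a b rab; apply: finj.
  by case: (ltgtP (f a) (f b)) => // /rank_mono; rewrite rab ltnn.
exists (perm rank_inj) => a b; rewrite !permE.
case: (ltgtP (f a) (f b)) => [/rank_mono //|/rank_mono|/finj ->]; last exact: ltnn.
by move=> /ltnW; rewrite leqNgt => /negbTE.
Qed.

Lemma perm_lt_card (s : 'S_n) (f : 'I_n -> T) :
  (forall a b, (s a < s b)%N = (f a < f b)%O) ->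
  forall a c, (s a < #|[set x | (f x < c)%O]|)%N = (f a < c)%O.
Proof.
move=> sf a c; have [fac|cfa] := ltP (f a) c.
  rewrite -[X in (X <= _)%N](card_perm_lt s (ltn_ord (s a))).
  apply: subset_leq_card; apply/fintype.subsetP => x; rewrite !inE ltnS leqNgt sf -leNgt.
  by move=> /le_lt_trans; apply.
apply/negbTE; rewrite -leqNgt -[X in (_ <= X)%N](card_perm_lt s (ltnW (ltn_ord (s a)))).
apply: subset_leq_card; apply/fintype.subsetP => x; rewrite !inE sf.
by move=> /lt_le_trans; apply.
Qed.

End RankPermutation.

Section SegmentPreserving.
Variables (n : nat) (seg : 'I_n -> nat).

Definition seg_preserving (r : 'S_n) : bool := [forall i, seg (r i) == seg i].

Lemma seg_order_transport (s s' : 'S_n) : exists2 t : 'S_n, seg_preserving t &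
  forall a c, seg a = seg c -> (s' (t a) < s' (t c))%N = (s a < s c)%N.
Proof.
have n_gt0 (a : 'I_n) : (0 < n)%N := leq_ltn_trans (leq0n a) (ltn_ord a).
(* Sort lexicographically by (segment, position under u). *)
pose key (u : 'S_n) a := (seg a * n + u a)%N.
have key_div u a : (key u a %/ n)%N = seg a.
  by rewrite /key divnMDl ?(n_gt0 a) // divn_small ?addn0.
have key_inj u : injective (key u).
  move=> a b eab; apply: (@perm_inj _ u); apply: ord_inj.
  by rewrite -(modn_small (ltn_ord (u a))) -(modnMDl (seg a)) -/(key u a) eab modnMDl modn_small.
have key_same u a c : seg a = seg c -> (key u a < key u c)%O = (u a < u c)%N.
  by move=> ac; rewrite ltEnat /= /key ac ltn_add2l.
have rank_seg u (r : 'S_n) : (forall a b, (r a < r b)%N = (key u a < key u b)%O) ->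
    forall a m, (r a < #|[set x | seg x < m]%N|)%N = (seg a < m)%N.
  move=> ru a m; have -> : [set x | seg x < m]%N = [set x | key u x < m * n]%N.
    by apply/setP => x; rewrite !inE -ltn_divLR ?key_div ?(n_gt0 x).
  by rewrite (perm_lt_card ru) ltEnat /= -ltn_divLR ?key_div ?(n_gt0 a).
have [r rs] := rank_perm_exists (key_inj s).
have [r' rs'] := rank_perm_exists (key_inj s').
pose t := (r * r'^-1)%g; have r't a : r' (t a) = r a by rewrite permM permKV.
have seg_t a : seg (t a) = seg a.
  have seg_lt m : (seg (t a) < m)%N = (seg a < m)%N.
    by rewrite -(rank_seg _ _ rs') r't (rank_seg _ _ rs).
  by apply/eqP; rewrite eqn_leq -ltnS seg_lt ltnSn /= -ltnS -seg_lt ltnSn.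
exists t; first by apply/forallP => a; rewrite seg_t.
by move=> a c ac; rewrite -key_same ?seg_t // -rs' !r't rs key_same.
Qed.

Definition seg_group : {set 'S_n} := [set r | seg_preserving r].

Variable b : 'S_n -> bool.
Hypothesis b_seg_order : forall s s' : 'S_n,
  (forall a c, seg a = seg c -> (s a < s c)%N = (s' a < s' c)%N) -> b s = b s'.

(* [seg_order_transport] gives a segment-preserving [t] such that [r * t * s] and [r]
   have the same within-segment order for every [r] in the group. *)
Lemma sum_seg_coset (s : 'S_n) :
  (\sum_(r in seg_group) b (r * s)%g = \sum_(r in seg_group) b r)%N.
Proof.
have [t /forallP tG ts] := seg_order_transport 1%g s.
rewrite (reindex_inj (mulIg t)) /=; apply: eq_big => [r|r].
  by rewrite !inE; apply/forallP/forallP => rt i; have := rt i; rewrite permM (eqP (tG _)).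
rewrite inE => /forallP rtG; congr (nat_of_bool _); apply: b_seg_order => a a' aa'.
have seg_r x : seg (r x) = seg x by rewrite -(eqP (tG _)) -permM (eqP (rtG _)).
by rewrite !permM ts ?perm1 // !seg_r.
Qed.

Lemma sum_seg_invariant (R : numFieldType) (p : 'S_n -> R) :
  (forall r s : 'S_n, seg_preserving r -> p (r * s)%g = p s) ->
  \sum_s (b s)%:R * p s = (\sum_s p s) * #|[set s | b s]|%:R / (n`!)%:R.
Proof.
move=> pG; pose c := ((\sum_(r in seg_group) b r)%N%:R : R).
have c_sum (F : 'S_n -> R) : (forall r s, seg_preserving r -> F (r * s)%g = F s) ->
    (\sum_s (b s)%:R * F s) *+ #|seg_group| = c * \sum_s F s.
  move=> FG; rewrite -sumr_const.
  transitivity (\sum_(r in seg_group) \sum_s (b (r * s)%g)%:R * F s).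
    apply: eq_bigr => r; rewrite inE => rG; rewrite (reindex_inj (mulgI r)) /=.
    by apply: eq_bigr => s _; rewrite FG.
  rewrite exchange_big mulr_sumr /=; apply: eq_bigr => s _.
  by rewrite -mulr_suml -natr_sum sum_seg_coset.
have card_b : #|[set s | b s]|%:R *+ #|seg_group| = c * (n`!)%:R :> R.
  have -> : (n`!)%:R = \sum_(s : 'S_n) 1 :> R by rewrite sumr_const card_Sn.
  rewrite -(c_sum (fun=> 1)) // -sum1_card natr_sum big_mkcond /=.
  by congr (_ *+ _); apply: eq_bigr => s _; rewrite inE mulr1; case: (b s).
have G0 : #|seg_group|%:R != 0 :> R.
  rewrite pnatr_eq0 -lt0n; apply/card_gt0P; exists 1%g.
  by rewrite inE; apply/forallP => i; rewrite perm1.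
have nf0 : (n`!)%:R != 0 :> R by rewrite pnatr_eq0 -lt0n fact_gt0.
apply: (mulfI G0); rewrite mulr_natl (c_sum _ pG).
by rewrite mulrCA mulrA -(mulrA _ _ #|seg_group|%:R) mulr_natr card_b mulrA mulfK // mulrC.
Qed.

End SegmentPreserving.

Section Blocks.
Variables (tau : nat -> nat) (K : nat).
Hypothesis tau0 : tau 0 = 0%N.
Hypothesis tau_lt : forall k, (k <= K)%N -> (tau k < tau k.+1)%N.

Definition in_block (x k : nat) : bool := (1 <= k <= K.+1)%N && (tau k.-1 < x <= tau k)%N.

Lemma in_block_exists x : (0 < x <= tau K.+1)%N -> exists k, in_block x k.
Proof.
case/andP => x_gt0 xK; have ex : exists k, (x <= tau k)%N by exists K.+1.
case: (ex_minnP ex) => m xm m_min; exists m; rewrite /in_block xm andbT.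
have m_gt0 : (0 < m)%N by case: m xm {m_min} => [|//]; rewrite tau0 leqNgt x_gt0.
rewrite m_gt0 (m_min _ xK) ltnNge /=; apply/negP => /m_min.
by rewrite leqNgt ltn_predL m_gt0.
Qed.

Lemma in_block_unique x k k' : in_block x k -> in_block x k' -> k = k'.
Proof.
have tau_mono : {in [pred k | k <= K.+1]%N &, {homo tau : a b / a <= b}}%N.
  apply: homo_leq_in; [exact: leqnn | exact: leq_trans | |].
    by move=> a b _; rewrite !inE => bK c /andP[_ /ltnW /leq_trans]; apply.
  by move=> a _; rewrite inE ltnS => aK; exact/ltnW/tau_lt.
wlog kk' : k k' / (k <= k')%N.
  move=> hwlog bk bk'; case/orP: (leq_total k k') => kk'; first exact: hwlog.
  by apply/esym; exact: hwlog.
move=> /andP[/andP[_ kK] /andP[_ xk]] /andP[/andP[k'1 k'K] /andP[xk' _]].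
apply/eqP; rewrite eqn_leq kk' leqNgt; apply/negP => kk'_lt.
have : (tau k <= tau k'.-1)%N.
  by apply: tau_mono; rewrite ?inE // -ltnS prednK // ltnW.
by move/(leq_trans xk); rewrite leqNgt xk'.
Qed.

End Blocks.

Local Open Scope classical_set_scope.
Local Open Scope ring_scope.

Section TupleRectangles.
Context {d1 d2 : measure_display} {T1 : measurableType d1} {T2 : measurableType d2}.
Context {n : nat}.
Local Notation U := (n.-tuple (T1 * T2)%type).

Definition tuple_rect (A : 'I_n -> set T1) (B : 'I_n -> set T2) : set U :=
  [set v | forall i, A i (tnth v i).1 /\ B i (tnth v i).2].

Definition tuple_rects : set (set U) :=
  [set C | exists A B, [/\ forall i, measurable (A i), forall i, measurable (B i)
                         & C = tuple_rect A B]].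

Lemma measurable_tuple_rect A B : (forall i, measurable (A i)) ->
  (forall i, measurable (B i)) -> measurable (tuple_rect A B).
Proof.
move=> mA mB; have -> : tuple_rect A B =
    \big[setI/setT]_(i < n) ((fun v => tnth v i) @^-1` (A i `*` B i)).
  apply/seteqP; split => v; rewrite -bigcap_seq /=.
    by move=> Av i _; exact: Av.
  by move=> Av i; apply: (Av i); exact: mem_index_enum.
apply: bigsetI_measurable => i _; rewrite -[X in measurable X]setTI.
by apply: measurable_tnth => //; exact: measurableX.
Qed.

Lemma setI_closed_tuple_rects : setI_closed tuple_rects.
Proof.
move=> _ _ [A [B [mA mB ->]]] [A' [B' [mA' mB' ->]]].
exists (fun i => A i `&` A' i), (fun i => B i `&` B' i); split.
- by move=> i; exact: measurableI.
- by move=> i; exact: measurableI.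
apply/seteqP; split => v /=.
  by move=> [AB AB'] i; have [? ?] := AB i; have [? ?] := AB' i.
by move=> AB; split => i; have [[? ?] [? ?]] := AB i.
Qed.

Lemma tuple_rects_generate : @measurable _ U = <<s tuple_rects >>.
Proof.
apply/seteqP; split; last first.
  apply: smallest_sub; first exact: sigma_algebra_measurable.
  by move=> _ [A [B [mA mB ->]]]; exact: measurable_tuple_rect.
apply: smallest_sub; first exact: smallest_sigma_algebra.
rewrite -bigcup_seq => C [i _ [D mD <-]]; rewrite setTI.
suff : <<s [set A `*` B | A in @measurable _ T1 & B in @measurable _ T2] >> `<=`
    [set D | <<s tuple_rects >> ((fun v : U => tnth v i) @^-1` D)].
  by apply; move: mD; rewrite measurable_prod_measurableType.
apply: smallest_sub.
  split => /=.
  - by rewrite preimage_set0; exact: sigma_algebra0.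
  - by move=> A mA; rewrite setTD -preimage_setC -setTD; exact: sigma_algebraCD.
  - by move=> F mF; rewrite preimage_bigcup; exact: sigma_algebra_bigcup.
move=> _ [A mA [B mB <-]]; apply: sub_sigma_algebra.
exists (fun j => if j == i then A else setT), (fun j => if j == i then B else setT).
split; [by move=> j; case: ifP | by move=> j; case: ifP |].
apply/seteqP; split => v /=.
  by move=> [Av Bv] j; case: eqP => [->|].
by move=> ABv; have := ABv i; rewrite eqxx.
Qed.

Lemma measure_unique_tuple_rect {R : realType} (m1 m2 : {measure set U -> \bar R}) :
  (m1 setT < +oo)%E ->
  (forall A B, (forall i, measurable (A i)) -> (forall i, measurable (B i)) ->
     m1 (tuple_rect A B) = m2 (tuple_rect A B)) ->
  forall C, measurable C -> m1 C = m2 C.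
Proof.
move=> m1oo m12 C mC; apply: (measure_unique tuple_rects (fun=> setT)) => //.
- exact: tuple_rects_generate.
- exact: setI_closed_tuple_rects.
- by move=> _; exists (fun=> setT), (fun=> setT); split => //; apply/seteqP.
- by rewrite bigcup_const.
- by move=> _ [A [B [mA mB ->]]]; exact: m12.
Qed.

End TupleRectangles.

Lemma measurable_permute_tuple {d : measure_display} {T : measurableType d} {n : nat}
  (r : 'S_n) : measurable_fun [set: n.-tuple T] (permute_tuple r).
Proof.
apply/measurable_fun_tnthP => k.
rewrite (_ : _ \o _ = fun v : n.-tuple T => tnth v (r k)); first exact: measurable_tnth.
by apply/funext => v /=; rewrite tnth_mktuple.
Qed.

HB.instance Definition _ {d : measure_display} {T : measurableType d} {n : nat} (r : 'S_n) :=
  isMeasurableFun.Build _ _ _ _ (@permute_tuple T n r) (measurable_permute_tuple r).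

Lemma measure_fiber_sum {d : measure_display} {T : measurableType d} {R : realType}
  (mu : {measure set T -> \bar R}) (F : finType) (g : T -> F) (b : pred F) :
  (forall c, measurable (g @^-1` [set c])) ->
  mu (g @^-1` [set c | b c]) = (\sum_(c | b c) mu (g @^-1` [set c]))%E.
Proof.
move=> mg; have union s : uniq s -> mu (\big[setU/set0]_(c <- s) g @^-1` [set c]) =
    (\sum_(c <- s) mu (g @^-1` [set c]))%E.
  elim: s => [_|c s IH /= /andP[cs us]]; first by rewrite !big_nil measure0.
  rewrite !big_cons -IH // measureU //; first exact: bigsetU_measurable.
  apply/seteqP; split => // v [/= gc]; rewrite -bigcup_seq => -[c' c's /= gc'].
  by move: cs; rewrite -gc gc' c's.
rewrite -big_filter -union ?filter_uniq ?index_enum_uniq //; congr (mu _).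
apply/seteqP; split => v; rewrite -bigcup_seq /=.
  by move=> bv; exists (g v) => //=; rewrite mem_filter bv mem_index_enum.
by move=> [c /=]; rewrite mem_filter => /andP[bc _] /= ->.
Qed.

Section ScoreLaw.
Variables (R : realType) (dO d : measure_display).
Variables (Omega : measurableType dO) (P : probability Omega R).
Variables (Z : measurableType d) (n : nat).
Variables (X : 'I_n -> Omega -> Z) (e : 'I_n -> Omega -> R).
Hypothesis mX : forall i, measurable_fun [set: Omega] (X i).
Hypothesis me : forall i, measurable_fun [set: Omega] (e i).
Hypothesis indep : mutually_independent P X e.
Variable nu : probability R R.
Hypothesis e_law : forall i A, measurable A -> P (e i @^-1` A) = nu A.
Hypothesis nu_atomless : forall c, nu [set c] = 0%E.
Variables (eps : R) (S : Z -> n.-tuple Z -> R).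
Hypothesis eps_neq0 : eps != 0.
Hypothesis symS : symmetric_transformation S.

Local Notation U := (n.-tuple (Z * R)%type).

Definition sample (w : Omega) : U := [tuple (X i w, e i w) | i < n].

Lemma measurable_sample : measurable_fun [set: Omega] sample.
Proof.
apply/measurable_fun_tnthP => i.
rewrite (_ : _ \o _ = fun w => (X i w, e i w)); first exact: measurable_fun_pair.
by apply/funext => w /=; rewrite tnth_mktuple.
Qed.

HB.instance Definition _ := isMeasurableFun.Build _ _ _ _ sample measurable_sample.

Local Notation law := (distribution P sample).

Lemma law_tuple_rect A B : (forall i, measurable (A i)) -> (forall i, measurable (B i)) ->
  law (tuple_rect A B) = (\prod_(i < n) P (X i @^-1` A i) * \prod_(i < n) nu (B i))%E.
Proof.
move=> mA mB; under [X in (_ * X)%E]eq_bigr => i _ do rewrite -(e_law i) //.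
rewrite -indep //; congr (P _); apply/seteqP; split => w /=.
  by move=> ABw; split => i _ /=; have := ABw i; rewrite tnth_mktuple => -[].
by move=> [Aw Bw] i; rewrite tnth_mktuple; split; [exact: Aw|exact: Bw].
Qed.

Definition tuple_score (v : U) (i : 'I_n) : R :=
  S (tnth v i).1 (map_tuple fst v) + eps * (tnth v i).2.

Lemma score_sample w : score S eps X e w = tuple_score (sample w).
Proof.
apply/funext => i; rewrite /score /tuple_score tnth_mktuple; congr (S _ _ + _).
by apply: eq_from_tnth => j; rewrite !tnth_map tnth_ord_tuple.
Qed.

Lemma measurable_tuple_score i : measurable_fun [set: U] (tuple_score ^~ i).
Proof.
have mfst j : measurable_fun [set: U] (fun v : U => (tnth v j).1).
  exact: measurableT_comp (measurable_tnth j).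
have mdata : measurable_fun [set: U] (map_tuple fst).
  apply/measurable_fun_tnthP => j.
  rewrite (_ : _ \o _ = fun v : U => (tnth v j).1); first exact: mfst.
  by apply/funext => v /=; rewrite tnth_map.
apply: measurable_funD.
  exact: measurableT_comp symS.1 (measurable_fun_pair (mfst i) mdata).
by apply: measurable_funM => //; exact: measurableT_comp (measurable_tnth i).
Qed.

Lemma measurable_score_tie i j : measurable [set v : U | tuple_score v i = tuple_score v j].
Proof.
rewrite (_ : [set v | _] = (fun v => tuple_score v i == tuple_score v j) @^-1` [set true]).
  rewrite -[X in measurable X]setTI.
  by apply: (measurable_fun_eqr (measurable_tuple_score i) (measurable_tuple_score j)).
by apply/seteqP; split => v /= /eqP.
Qed.

Definition resample (i : 'I_n) (p : U * R) : U :=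
  [tuple if k == i then ((tnth p.1 k).1, p.2) else tnth p.1 k | k < n].

Lemma measurable_resample i : measurable_fun [set: U * R] (resample i).
Proof.
apply/measurable_fun_tnthP => k.
rewrite (_ : _ \o _ = fun p : U * R =>
    if k == i then ((tnth p.1 k).1, p.2) else tnth p.1 k); last first.
  by apply/funext => p /=; rewrite tnth_mktuple.
case: (k == i); last exact: measurableT_comp (measurable_tnth k) measurable_fst.
apply: measurable_fun_pair => //.
exact: measurableT_comp (measurableT_comp (measurable_tnth k) measurable_fst).
Qed.

HB.instance Definition _ i :=
  isMeasurableFun.Build _ _ _ _ (resample i) (measurable_resample i).

Lemma law_resample i C : measurable C -> law C = distribution (law \x nu)%E (resample i) C.
Proof.
move: C; apply: measure_unique_tuple_rect.
  by apply: (le_lt_trans (probability_le1 _ _)) => //; exact: ltry.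
move=> A B mA mB; pose B' k := if k == i then setT else B k.
change (law (tuple_rect A B) = (law \x nu)%E (resample i @^-1` tuple_rect A B)).
have mB' k : measurable (B' k) by rewrite /B'; case: ifP.
have -> : resample i @^-1` tuple_rect A B = tuple_rect A B' `*` B i.
  apply/seteqP; split => -[v t] /=.
    move=> ABv; split => [k|]; last by have := ABv i; rewrite tnth_mktuple eqxx => -[].
    by have := ABv k; rewrite /B' tnth_mktuple; case: eqP => [->|_] //= [].
  move=> [ABv Bt] k; rewrite tnth_mktuple; have := ABv k; rewrite /B'.
  by case: eqP => [->|_] //= [].
rewrite product_measure1E //; last exact: measurable_tuple_rect.
rewrite /= !law_tuple_rect // -muleA; congr (_ * _)%E.
rewrite (bigD1 i) //= [in RHS](bigD1 i) //= /B' eqxx probability_setT mul1e muleC.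
by congr (_ * _)%E; apply: eq_bigr => k /negbTE ->.
Qed.

Lemma law_score_tie i j : i != j -> law [set v | tuple_score v i = tuple_score v j] = 0%E.
Proof.
move=> ij; rewrite (law_resample i); last exact: measurable_score_tie.
have data_resample v t : map_tuple fst (resample i (v, t)) = map_tuple fst v.
  by apply: eq_from_tnth => k; rewrite !tnth_map tnth_ord_tuple; case: eqP.
pose c (v : U) := S (tnth v i).1 (map_tuple fst v).
have score_i v t : tuple_score (resample i (v, t)) i = c v + eps * t.
  by rewrite /tuple_score data_resample tnth_mktuple eqxx.
have score_j v t : tuple_score (resample i (v, t)) j = tuple_score v j.
  by rewrite /tuple_score data_resample tnth_mktuple eq_sym (negbTE ij).
(* Given the other coordinates, a tie pins the fresh noise value to one point. *)
apply: integral0_eq => v _ /=; rewrite -(nu_atomless ((tuple_score v j - c v) / eps)).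
congr (nu _); apply/seteqP; split => t; rewrite /xsection /= inE /= score_i score_j.
  by move=> <-; rewrite addrAC subrr add0r mulrC mulKf.
by move=> ->; rewrite mulrC divfK // addrC subrK.
Qed.

Definition score_order (v : U) : {ffun 'I_n * 'I_n -> bool} :=
  [ffun p => tuple_score v p.1 < tuple_score v p.2].

Lemma measurable_score_order M : measurable (score_order @^-1` [set M]).
Proof.
have -> : score_order @^-1` [set M] = \big[setI/setT]_(p <- index_enum _)
    ((fun v => tuple_score v p.1 < tuple_score v p.2) @^-1` [set M p]).
  apply/seteqP; split => v; rewrite -bigcap_seq /=.
    by move=> <- p _; rewrite ffunE.
  by move=> vM; apply/ffunP => p; rewrite ffunE; apply: vM; exact: mem_index_enum.
apply: bigsetI_measurable => p _; rewrite -[X in measurable X]setTI.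
by apply: (measurable_fun_ltr (measurable_tuple_score _) (measurable_tuple_score _)).
Qed.

(* Away from ties the comparison pattern of the scores is that of their ranks. *)
Lemma law_score_order_null M : M \notin [set perm_order s | s : 'S_n]%SET ->
  law (score_order @^-1` [set M]) = 0%E.
Proof.
move=> Mnot; have [[v vM]|] := pselect (exists v, score_order v = M); last first.
  move=> noM; rewrite (_ : _ @^-1` _ = set0) ?measure0 //.
  by apply/seteqP; split => // v /= vM; apply: noM; exists v.
have : ~~ injectiveb (tuple_score v).
  apply/negP => /injectiveP /rank_perm_exists [s sv]; move/negP: Mnot; apply.
  by apply/imsetP; exists s => //; apply/ffunP => p; rewrite -vM !ffunE sv.
case/injectivePn => i [j ij vij].
apply: (subset_measure0 (measurable_score_order M) (measurable_score_tie i j) _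
  (law_score_tie ij)).
move=> u /= uM; have := congr1 (fun M : {ffun _ -> bool} => (M (i, j), M (j, i))) uM.
rewrite -vM !ffunE /= vij ltxx => -[/negbT uij /negbT uji].
by apply/eqP; rewrite eq_le !leNgt uij uji.
Qed.

Lemma law_score_orderE (b : pred {ffun 'I_n * 'I_n -> bool}) :
  law (score_order @^-1` [set M | b M]) =
  (\sum_(s | b (perm_order s)) law (score_order @^-1` [set perm_order s]))%E.
Proof.
rewrite measure_fiber_sum; last exact: measurable_score_order.
rewrite (bigID (mem [set perm_order s | s : 'S_n]%SET)) /=.
rewrite [X in (_ + X)%E]big1 ?adde0; last by move=> M /andP[_ /law_score_order_null].
rewrite (eq_bigl (fun M => (M \in [set perm_order s | s : 'S_n]%SET) && b M)).
  by rewrite big_imset_cond //; move=> s s' _ _; exact: perm_order_inj.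
by move=> M; rewrite andbC.
Qed.

Lemma score_permute r v k : tuple_score (permute_tuple r v) k = tuple_score v (r k).
Proof.
rewrite /tuple_score tnth_mktuple (symS.2 _ (map_tuple fst v) r); congr (S _ _ + _).
by apply: eq_from_tnth => j; rewrite !(tnth_map, tnth_mktuple).
Qed.

Variable seg : 'I_n -> nat.
Hypothesis X_law_seg : forall i j, seg i = seg j ->
  forall A, measurable A -> P (X i @^-1` A) = P (X j @^-1` A).

Lemma law_permute r : seg_preserving seg r ->
  forall C, measurable C -> distribution law (permute_tuple r) C = law C.
Proof.
move=> /forallP rG; apply: measure_unique_tuple_rect.
  by apply: (le_lt_trans (probability_le1 _ _)) => //; exact: ltry.
move=> A B mA mB.
change (law (permute_tuple r @^-1` tuple_rect A B) = law (tuple_rect A B)).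
have -> : permute_tuple r @^-1` tuple_rect A B =
    tuple_rect (fun k => A (r^-1 k)%g) (fun k => B (r^-1 k)%g).
  apply/seteqP; split => v /= ABv k.
    by have := ABv (r^-1 k)%g; rewrite tnth_mktuple permKV.
  by rewrite tnth_mktuple; have := ABv (r k); rewrite permK.
rewrite !law_tuple_rect //; congr (_ * _)%E.
  rewrite [LHS](reindex_inj (@perm_inj _ r)) /=; apply: eq_bigr => k _.
  by rewrite permK; apply: X_law_seg _ _ (eqP (rG k)) _ (mA k).
by rewrite [LHS](reindex_inj (@perm_inj _ r)); apply: eq_bigr => k _; rewrite permK.
Qed.

Lemma law_score_order_seg r s : seg_preserving seg r ->
  law (score_order @^-1` [set perm_order (r * s)%g]) =
  law (score_order @^-1` [set perm_order s]).
Proof.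
move=> rG; rewrite -(law_permute rG); last exact: measurable_score_order.
congr (law _); apply/seteqP; split => v /= /ffunP vs; apply/ffunP => -[a b].
  have := vs ((r^-1)%g a, (r^-1)%g b).
  by rewrite !ffunE /= !score_permute !permM !permKV.
by have := vs (r a, r b); rewrite !ffunE /= !score_permute !permM.
Qed.

Variables (L : nat) (I : 'I_L -> {set 'I_n}) (Agg : seq nat -> R).
Hypothesis I_in_seg : forall l, {in I l &, forall i j, seg i = seg j}.

Definition order_stat (M : {ffun 'I_n * 'I_n -> bool}) : 'I_L -> R :=
  fun l => Agg [seq #|[set j in I l | ~~ M (i, j)]| | i <- enum (I l)].

Lemma stat_vector_order w :
  stat_vector S eps X e I Agg w = order_stat (score_order (sample w)).
Proof.
apply/funext => l; rewrite /stat_vector /order_stat score_sample; congr Agg.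
by apply: eq_map => i; apply: eq_card => j; rewrite !inE ffunE leNgt.
Qed.

Lemma order_stat_perm s : order_stat (perm_order s) = Gperm I Agg s.
Proof.
apply/funext => l; congr Agg; apply: eq_map => i.
by apply: eq_card => j; rewrite !inE ffunE /= ltnNge negbK.
Qed.

Lemma Gperm_seg_order (s s' : 'S_n) :
  (forall a c, seg a = seg c -> (s a < s c)%N = (s' a < s' c)%N) ->
  Gperm I Agg s = Gperm I Agg s'.
Proof.
move=> ss'; apply/funext => l; rewrite /Gperm; congr Agg; apply/eq_in_map => i.
rewrite mem_enum => il; apply: eq_card => j; rewrite !inE.
by case jl : (j \in I l) => //=; rewrite leqNgt [in RHS]leqNgt ss' // (I_in_seg jl il).
Qed.

Lemma law_stat_vector (B : set ('I_L -> R)) :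
  P [set w | B (stat_vector S eps X e I Agg w)] = uniform_perm_law I Agg B.
Proof.
pose b s := `[< B (Gperm I Agg s) >].
pose p s := fine (law (score_order @^-1` [set perm_order s])).
have pE s : law (score_order @^-1` [set perm_order s]) = (p s)%:E.
  rewrite fineK // ge0_fin_numE //; apply: (le_lt_trans (probability_le1 _ _)).
    exact: measurable_score_order.
  exact: ltry.
have -> : P [set w | B (stat_vector S eps X e I Agg w)] =
    law (score_order @^-1` [set M | `[< B (order_stat M) >]]).
  by congr (P _); apply/seteqP; split => w /=; rewrite stat_vector_order => /asboolP.
rewrite law_score_orderE (eq_bigl b) => [|s]; last by rewrite /b order_stat_perm.
have p1 : \sum_s p s = 1.
  have := law_score_orderE xpredT; rewrite (_ : _ @^-1` _ = setT); last exact/seteqP.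
  by rewrite probability_setT; under eq_bigr do rewrite pE; rewrite sumEFin => -[].
under eq_bigr do rewrite pE; rewrite sumEFin /uniform_perm_law; congr EFin.
have -> : \sum_(s | b s) p s = \sum_s (b s)%:R * p s.
  by rewrite big_mkcond; apply: eq_bigr => s _; case: (b s); rewrite ?mul1r ?mul0r.
have b_seg (s s' : 'S_n) : (forall a c, seg a = seg c -> (s a < s c)%N = (s' a < s' c)%N) ->
    b s = b s'.
  by move=> ss'; rewrite /b (Gperm_seg_order ss').
have p_seg r s : seg_preserving seg r -> p (r * s)%g = p s.
  by move=> rG; rewrite /p law_score_order_seg.
rewrite (sum_seg_invariant b_seg p_seg) p1 mul1r; congr (_%:R / _).
apply: eq_card => s; rewrite inE.
by apply/idP/idP => h; [rewrite in_setE | move: h; rewrite in_setE].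
Qed.

End ScoreLaw.

Section StdNormal.
Variable R : realType.

(* [normal_prob] lives on a copy of [R] with another measurable-type instance. *)
Definition std_normal_prob : set R -> \bar R := normal_prob 0 1.

Let std_normal0 : std_normal_prob set0 = 0%E.
Proof. exact: (@measure0 _ _ _ (normal_prob (0 : R) 1)). Qed.

Let std_normal_ge0 A : (0 <= std_normal_prob A)%E.
Proof. exact: (@measure_ge0 _ _ _ (normal_prob (0 : R) 1)). Qed.

Let std_normal_sigma_additive : semi_sigma_additive std_normal_prob.
Proof. exact: (@measure_semi_sigma_additive _ _ _ (normal_prob (0 : R) 1)). Qed.

HB.instance Definition _ := isMeasure.Build _ _ _ std_normal_prob
  std_normal0 std_normal_ge0 std_normal_sigma_additive.

Let std_normal_setT : std_normal_prob setT = 1%E.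
Proof. exact: (@probability_setT _ _ _ (normal_prob (0 : R) 1)). Qed.

HB.instance Definition _ := Measure_isProbability.Build _ _ _ std_normal_prob std_normal_setT.

End StdNormal.

Lemma std_normal_prob_set1 {R : realType} (c : R) : std_normal_prob [set c] = 0%E.
Proof.
apply: (@normal_prob_dominates R 0 1 [set c]) => //.
by apply/measure0_null_setP; [exact: measurable_set1 | exact: lebesgue_measure_set1].
Qed.

Theorem theorem2 (R : realType) (dO d : measure_display)
  (Omega : measurableType dO) (P : probability Omega R)
  (Z : measurableType d) (n L : nat)
  (X : 'I_n -> Omega -> Z) (e : 'I_n -> Omega -> R)
  (hX : forall i, measurable_fun [set: Omega] (X i))
  (he : forall i, measurable_fun [set: Omega] (e i))
  (hind : mutually_independent P X e)
  (hgauss : forall i (A : set R), measurable A ->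
     P (e i @^-1` A) = normal_prob 0 1 A)
  (eps : R) (heps : 0 < eps)
  (S : Z -> n.-tuple Z -> R) (hS : symmetric_transformation S)
  (I : 'I_L -> {set 'I_n}) (hI : forall l, I l != finset.set0)
  (Agg : seq nat -> R) :
  (* (i) under H0: Z_1..Z_n i.i.d. with an arbitrary law P1 *)
  (forall P1 : probability Z R,
     (forall i (A : set Z), measurable A -> P (X i @^-1` A) = P1 A) ->
     forall B : set ('I_L -> R),
       P [set w | B (stat_vector S eps X e I Agg w)] = uniform_perm_law I Agg B)
  /\
  (* (ii) changepoint model with no changepoint inside any I_l *)
  (forall (K : nat) (tau : nat -> nat) (Pk : nat -> probability Z R),
     tau 0%N = 0%N -> tau K.+1 = n ->
     (forall k, (k <= K)%N -> (tau k < tau k.+1)%N) ->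
     (forall k, (1 <= k <= K)%N -> (Pk k.+1 : set Z -> \bar R) <> Pk k) ->
     (* Z_i (i in 1..n, i.e. ordinal i has index i+1) has law P_k
        when tau_{k-1} < i+1 <= tau_k *)
     (forall (i : 'I_n) (k : nat), (1 <= k <= K.+1)%N ->
        (tau k.-1 < i.+1 <= tau k)%N ->
        forall A : set Z, measurable A -> P (X i @^-1` A) = Pk k A) ->
     (forall l, exists k, (1 <= k <= K.+1)%N /\
        forall i : 'I_n, i \in I l -> (tau k.-1 < i.+1 <= tau k)%N) ->
     forall B : set ('I_L -> R),
       P [set w | B (stat_vector S eps X e I Agg w)] = uniform_perm_law I Agg B).
Proof.
have eps_neq0 : eps != 0 by rewrite gt_eqF.
have stat_law := law_stat_vector hX he hind (nu := @std_normal_prob R) hgauss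
  std_normal_prob_set1 eps_neq0 hS.
split=> [P1 X_law B | K tau Pk tau0 tauK tau_lt _ X_law I_block B].
  by apply: (stat_law (fun=> 0%N)) => // i j _ A mA; rewrite !X_law.
have block (i : 'I_n) : exists k, in_block tau K i.+1 k.
  by apply: in_block_exists => //; rewrite tauK ltn_ord.
pose seg i := xchoose (block i).
have seg_block (i : 'I_n) : in_block tau K i.+1 (seg i) := xchooseP (block i).
apply: (stat_law seg) => [i j sij A mA | l i j il jl].
  have /andP[? ?] := seg_block i; have /andP[? ?] := seg_block j.
  by rewrite (X_law i (seg i)) // (X_law j (seg j)) // sij.
have [k [k_range ik]] := I_block l.
have seg_k x : x \in I l -> seg x = k.
  by move=> xl; apply: (in_block_unique tau_lt (seg_block x)); rewrite /in_block k_range ik.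
by rewrite !seg_k.
Qed.
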